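(* In the setting of the context (fix $i\ge 2$), each of the subgroups $E_l$ contains a non-central element of prime order.
   Context: A finite $p$-group $P$ is extra-special if $P'=Z(P)$ has order $p$. For a group $X$ acted on by $Y$, $[X,Y]$ is generated by all $x^{-1}x^{y}$. Construction: let $p_1,p_2,\dots$ be an infinite sequence of primes with $p_{i+1}\ne p_i$ for all $i$. Define finite groups $G_1\le G_2\le\cdots$ and subgroups $R_i\le G_i$ recursively. Let $G_1=R_1$ be cyclic of order $p_1$. For $i\ge2$: let $M_i$ be an extra-special group of order $p_i^3$; let $B$ be the base group of the regular wreath product $M_i\wr G_{i-1}$ (direct product of copies $M_i^{(g)}$, $g\in G_{i-1}$, permuted regularly by $G_{i-1}$); let $B_i=B/[B',G_{i-1}]$ with the induced $G_{i-1}$-action; $D_i=[B_i,R_{i-1}]$; $G_i=D_i\rtimes G_{i-1}$; $R_i=D_i'$. Here $R_{i-1}$ has order $p_{i-1}$ and is central in $G_{i-1}$; $B_i$ is the central product of the images $A_g\cong M_i$ of $M_i^{(g)}$, $g\in G_{i-1}$. Let $O_1,\dots,O_m$ be the orbits of $R_{i-1}$ on the set $\{A_g: g\in G_{i-1}\}$ and $E_l=\big[\prod_{A_g\in O_l}A_g,\,R_{i-1}\big]$ for $l=1,\dots,m$. *)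

From HB Require Import structures.
From mathcomp Require Import all_boot all_order all_algebra all_fingroup all_solvable.
Set Implicit Arguments. Unset Strict Implicit. Unset Printing Implicit Defensive.

Local Open Scope group_scope.

Definition extra_special (gT : finGroupType) (p : nat) (P : {set gT}) : Prop :=
  [/\ p.-group P, P^`(1) = 'Z(P) & #|'Z(P)| = p].

From HB Require Import structures.
From mathcomp Require Import all_boot all_order all_algebra all_fingroup all_solvable.

(* Let N = [B', G].  Because M' = Z(M) is cyclic of order p, summing the
   M'-components of an element of B' = \prod_h (M^h)' (each conjugated back
   into M) gives a G-invariant homomorphism from B' to Z/p, which therefore
   vanishes on N.  Pick a, b in M with w = [a, b] <> 1 and 1 <> r in R.  The
   coset u of [a^g, r] lies in E, and u^p = 1 since [a^g, r]^p = [(a^p)^g, r]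
   with a^p in M'.  For s = r (p odd), resp. s = r^2 (p = 2, so q is odd),
   [[a^g, r], [b^g, s]] is w^g w^(gr), resp. w^g, whose coordinate sum 2w,
   resp. w, is nonzero; so u does not commute with the coset of [b^g, s] in E. *)

Set Implicit Arguments.
Unset Strict Implicit.
Unset Printing Implicit Defensive.
Import GRing.Theory.
Local Open Scope group_scope.

Section GroupFacts.

Variable gT : finGroupType.
Implicit Types (x y : gT) (A : {set gT}).

Lemma nonabelian_commg A :
  ~~ abelian A -> exists2 x, x \in A & exists2 y, y \in A & [~ x, y] != 1.
Proof.
case/subsetPn=> x Ax; rewrite -sub_cent1 => /subsetPn[y Ay nxy].
by exists x => //; exists y => //; apply: contra nxy => /commgP/commute_sym/cent1P.
Qed.

Lemma commgMM x1 y1 x2 y2 :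
    commute x1 y1 -> commute x1 y2 -> commute x2 y1 -> commute x2 y2 ->
  [~ x1 * y1, x2 * y2] = [~ x1, x2] * [~ y1, y2].
Proof.
move=> c11 c12 c21 c22.
have e12 : [~ x1, y2] = 1 by apply/eqP/commgP.
have e21 : [~ y1, x2] = 1 by apply/eqP/commgP; apply: commute_sym.
have f11 : x1 ^ y1 = x1 by apply/conjg_fixP/commgP.
have f12 : x1 ^ y2 = x1 by apply/conjg_fixP/commgP.
have f21 : x2 ^ y1 = x2 by apply/conjg_fixP/commgP.
have f22 : x2 ^ y2 = x2 by apply/conjg_fixP/commgP.
rewrite commMgJ (commgMJ x1 x2 y2) (commgMJ y1 x2 y2) e12 e21.
by rewrite conj1g mul1g mulg1 !conjRg f12 f22 f11 f21.
Qed.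

Lemma commgVV x y :
  commute x [~ x, y] -> commute y [~ x, y] -> [~ x^-1, y^-1] = [~ x, y].
Proof.
move=> cxxy cyxy; have cyx'y : commute y [~ x^-1, y].
  by rewrite commVg //; apply: commuteV.
by rewrite commgV // commVg // invgK.
Qed.

Lemma der1_bigdprod_center I r (P : pred I) (F : I -> {group gT}) (A : {group gT}) :
    \big[dprod/1]_(i <- r | P i) F i = A ->
    (forall i, P i -> (F i)^`(1) = 'Z(F i)) ->
  A^`(1) = 'Z(A).
Proof.
move=> defA derF; rewrite -(der_bigdprod 1 defA) -(center_bigdprod defA).
exact: eq_bigr.
Qed.

Lemma order_prime_expg (p : nat) x : prime p -> x ^+ p = 1 -> x != 1 -> #[x] = p.
Proof.
move=> pr_p xp1 ntx; apply/(prime_nt_dvdP pr_p); first by rewrite order_eq1.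
by rewrite order_dvdn xp1.
Qed.

Lemma cyclic_zmod_embedding A : cyclic A ->
  exists (V : zmodType) (f : gT -> V),
    {in A &, {morph f : x y / x * y >-> (x + y)%R}} /\
    {in A, forall x, f x = 0%R -> x = 1}.
Proof.
case/cyclicP=> z ->; exists 'Z_#[z], (invm (injm_Zpm z)).
have /injmP := injm_invm (injm_Zpm z); rewrite /= im_Zpm => injf.
split=> [x y Ax Ay | x Ax fx0]; first by rewrite morphM ?im_Zpm.
by apply: injf; rewrite ?group1 // fx0 morph1.
Qed.

End GroupFacts.

Section CosetCommutators.

Variables (gT : finGroupType) (N : {group gT}).

Lemma coset_commg_mem_commg (H R : {group gT}) (O : {set {set coset_of N}}) x y :
    H / N \in O -> x \in H -> y \in R -> x \in 'N(N) -> y \in 'N(N) ->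
  coset N [~ x, y] \in [~: <<\bigcup_(A in O) A>>, R / N].
Proof.
move=> OH Hx Ry Nx Ny; rewrite morphR //; apply: mem_commg; last exact: mem_quotient.
by rewrite mem_gen //; apply/bigcupP; exists (H / N) => //; apply: mem_quotient.
Qed.

Lemma coset_notin_center (E : {set coset_of N}) x y :
    x \in 'N(N) -> y \in 'N(N) -> coset N y \in E -> [~ x, y] \notin N ->
  coset N x \notin 'Z(E).
Proof.
move=> Nx Ny Ey; apply: contra => /setIP[_ /centP/(_ _ Ey)/commgP].
by rewrite -morphR // => /eqP/coset_idr; apply; rewrite groupR.
Qed.

End CosetCommutators.

Section ExtraSpecial.

Variables (gT : finGroupType) (p : nat) (M : {group gT}).

Lemma extra_special_p3_extraspecial :
  prime p -> extra_special p M -> #|M| = (p ^ 3)%N -> extraspecial M.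
Proof. by move=> pr_p [_ _ oZ] oM; apply: (card_p3group_extraspecial pr_p oM oZ). Qed.

Lemma expg_extraspecial_der x :
  p.-group M -> extraspecial M -> x \in M -> x ^+ p \in M^`(1).
Proof.
move=> pM [[defPhi defM'] _] Mx.
rewrite defM' -defPhi (Phi_joing pM) mem_gen // inE.
by have := Mho_p_elt 1 Mx (mem_p_elt pM Mx); rewrite expn1 => ->; rewrite orbT.
Qed.

End ExtraSpecial.

Section ConjugateDirectProduct.

Variables (gT : finGroupType) (G M B : {group gT}).
Hypotheses (defB : \big[dprod/1]_(g in G) M :^ g = B) (nBG : G \subset 'N(B)).

Definition other_factors h : {group gT} := <<\bigcup_(k in G | k != h) M :^ k>>%G.

Lemma dprod_other_factors h : h \in G -> M :^ h \x other_factors h = B.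
Proof.
move=> Gh; have := defB; rewrite (bigD1 h Gh) /= => defB'.
have [[K H defK defH] _ _ _] := dprodP defB'.
by rewrite /other_factors (bigdprodWY defH) -defH.
Qed.

Lemma conj_sub_other_factors h k : k \in G -> k != h -> M :^ k \subset other_factors h.
Proof. by move=> Gk nkh; rewrite sub_gen // (bigcup_sup k) ?Gk. Qed.

Lemma conj_sub_bigdprod h : h \in G -> M :^ h \subset B.
Proof. by move=> Gh; have [_ <- _ _] := dprodP (dprod_other_factors Gh); apply: mulG_subl. Qed.

Lemma commute_conj_factors h k x y :
  h \in G -> k \in G -> k != h -> x \in M :^ h -> y \in M :^ k -> commute x y.
Proof.
move=> Gh Gk nkh Mx My; have [_ _ cMC _] := dprodP (dprod_other_factors Gh).
have /centP cxy := subsetP cMC y (subsetP (conj_sub_other_factors Gk nkh) y My).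
exact/commute_sym/cxy.
Qed.

Let mulg_neq (h r : gT) : r != 1 -> h * r != h.
Proof. by move=> ntr; rewrite -{2}(mulg1 h) (inj_eq (mulgI h)). Qed.

Definition coord h x := divgr (M :^ h) (other_factors h) x.

Lemma coordM h : h \in G -> {in B &, {morph coord h : x y / x * y}}.
Proof.
move=> Gh; have [_ defMC cMC tiMC] := dprodP (dprod_other_factors Gh).
by apply: divgrM => //; apply/complP; rewrite tiMC defMC.
Qed.

Lemma coord_id h x : x \in M :^ h -> coord h x = x.
Proof. exact: divgr_id. Qed.

Lemma coord_other h x : h \in G -> x \in other_factors h -> coord h x = 1.
Proof.
move=> Gh Cx; have [_ _ _ tiMC] := dprodP (dprod_other_factors Gh).
by rewrite /coord /divgr remgr_id ?mulgV.
Qed.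

Lemma mem_coord h x : h \in G -> x \in B -> coord h x \in M :^ h.
Proof.
by move=> Gh Bx; apply: mem_divgr; have [_ -> _ _] := dprodP (dprod_other_factors Gh).
Qed.

Lemma conj_other_factors h k :
  h \in G -> k \in G -> other_factors h :^ k \subset other_factors (h * k).
Proof.
move=> Gh Gk; rewrite sub_conjg gen_subG; apply/bigcupsP=> i /andP[Gi nih].
rewrite -sub_conjgV invgK -conjsgM conj_sub_other_factors ?groupM //.
by rewrite (inj_eq (mulIg k)).
Qed.

Lemma coordJ h k x :
  h \in G -> k \in G -> x \in B -> coord (h * k) (x ^ k) = coord h x ^ k.
Proof.
move=> Gh Gk Bx; have [_ defMC _ _] := dprodP (dprod_other_factors Gh).
rewrite {1}(divgr_eq (M :^ h) (other_factors h) x) conjMg.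
have [_ _ _ tiMC] := dprodP (dprod_other_factors (groupM Gh Gk)).
rewrite [coord (h * k) _]/coord divgrMid //=; first by rewrite conjsgM memJ_conjg mem_coord.
by apply: (subsetP (conj_other_factors Gh Gk)); rewrite memJ_conjg mem_remgr ?defMC.
Qed.

Lemma coord_der h x : h \in G -> x \in B^`(1) -> coord h x \in (M :^ h)^`(1).
Proof.
move=> Gh B'x; pose f := Morphism (coordM Gh).
have sfB : f @* B \subset M :^ h.
  by apply/subsetP=> _ /morphimP[y _ By ->]; apply: mem_coord.
have : f x \in f @* B^`(1) by rewrite mem_morphim // (subsetP (der_sub 1 B)).
by rewrite morphim_der //; apply: subsetP; apply: dergS.
Qed.

Lemma expg_commg_conj_mem n a g r :
    a \in M -> a ^+ n \in M^`(1) -> g \in G -> r \in G -> r != 1 ->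
  [~ a ^ g, r] ^+ n \in [~: B^`(1), G].
Proof.
move=> Ma M'an Gg Gr ntr; rewrite -commXg; last first.
  rewrite commgEl -conjgM; apply: commuteM; first by apply: commuteV.
  by apply: (commute_conj_factors Gg (groupM Gg Gr)); rewrite ?mulg_neq ?memJ_conjg.
rewrite mem_commg // -conjXg (subsetP (dergS 1 (conj_sub_bigdprod Gg))) //.
by rewrite derJ memJ_conjg.
Qed.

Lemma conj_der_mem_der h w : h \in G -> w \in M^`(1) -> w ^ h \in B^`(1).
Proof.
by move=> Gh M'w; rewrite (subsetP (dergS 1 (conj_sub_bigdprod Gh))) // derJ memJ_conjg.
Qed.

Section CoordinateSum.

Variables (V : zmodType) (f : gT -> V).
Hypothesis fM : {in M^`(1) &, {morph f : x y / x * y >-> (x + y)%R}}.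

Let f1 : f 1 = 0%R.
Proof. by apply: (addrI (f 1)); rewrite -fM ?mulg1 ?addr0. Qed.

Definition coord_sum x := (\sum_(h in G) f (coord h x ^ h^-1))%R.

Let coord_der_conj h x : h \in G -> x \in B^`(1) -> coord h x ^ h^-1 \in M^`(1).
Proof. by move=> Gh B'x; rewrite -mem_conjg -derJ coord_der. Qed.

Lemma coord_sumM : {in B^`(1) &, {morph coord_sum : x y / x * y >-> (x + y)%R}}.
Proof.
move=> x y B'x B'y; rewrite /coord_sum -big_split /=; apply: eq_bigr => h Gh.
by rewrite coordM ?(subsetP (der_sub 1 B)) // conjMg fM ?coord_der_conj.
Qed.

Lemma coord_sumJ x k : x \in B -> k \in G -> coord_sum (x ^ k) = coord_sum x.
Proof.
move=> Bx Gk; rewrite /coord_sum (reindex_inj (mulIg k)) /=.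
apply: eq_big => [h | h Gh]; first by rewrite groupMr.
by rewrite coordJ // -?conjgM ?invMg ?mulKVg // -(groupMr _ Gk).
Qed.

Lemma coord_sum_conj_der g w : g \in G -> w \in M^`(1) -> coord_sum (w ^ g) = f w.
Proof.
move=> Gg M'w; have Mwg : w ^ g \in M :^ g by rewrite memJ_conjg (subsetP (der_sub 1 M)).
rewrite /coord_sum (bigD1 g Gg) /= big1 => [|h /andP[Gh nhg]].
  by rewrite coord_id // conjgK addr0.
rewrite coord_other ?conj1g //.
by apply: (subsetP (conj_sub_other_factors Gg _)) Mwg; rewrite eq_sym.
Qed.

Lemma coord_sum1 : coord_sum 1 = 0%R.
Proof. by apply: (addrI (coord_sum 1)); rewrite -coord_sumM ?mulg1 ?addr0. Qed.

Lemma coord_sum_der_commg x : x \in [~: B^`(1), G] -> coord_sum x = 0%R.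
Proof.
have nB'G : G \subset 'N(B^`(1)) := char_norm_trans (der_char 1 B) nBG.
have gK : group_set [set y in B^`(1) | coord_sum y == 0%R].
  apply/group_setP; split=> [|y z]; first by rewrite inE group1 coord_sum1 eqxx.
  rewrite !inE => /andP[B'y /eqP y0] /andP[B'z /eqP z0].
  by rewrite groupM // coord_sumM // y0 z0 addr0 eqxx.
suff /subsetP sNK : [~: B^`(1), G] \subset Group gK.
  by move/sNK; rewrite inE => /andP[_ /eqP].
rewrite gen_subG; apply/subsetP=> _ /imset2P[y k B'y Gk ->].
have B'yk : y ^ k \in B^`(1) by rewrite memJ_norm // (subsetP nB'G).
rewrite inE commgEl groupM ?groupV //= coord_sumM ?groupV // coord_sumJ //.
  by rewrite -coord_sumM ?groupV // mulVg coord_sum1.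
exact: (subsetP (der_sub 1 B)).
Qed.

End CoordinateSum.

Section CentralDerived.

Hypothesis derM : M^`(1) = 'Z(M).

Lemma der_bigdprod_conj_center : B^`(1) = 'Z(B).
Proof.
by apply: (der1_bigdprod_center defB) => h _; rewrite /= derJ derM conjIg -centJ.
Qed.

Lemma bigdprod_norm_der_commg : B \subset 'N([~: B^`(1), G]).
Proof.
have nB'G : G \subset 'N(B^`(1)) := char_norm_trans (der_char 1 B) nBG.
apply: cents_norm; rewrite centsC (subset_trans _ (subsetIr B 'C(B))) //.
by rewrite -/('Z(B)) -der_bigdprod_conj_center commg_subl.
Qed.

Lemma commgVV_der_center x y : x \in M -> y \in M -> [~ x^-1, y^-1] = [~ x, y].
Proof.
move=> Mx My; have /setIP[_ /centP cMxy] : [~ x, y] \in 'Z(M) by rewrite -derM mem_commg.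
by apply: commgVV; apply: commute_sym; apply: cMxy.
Qed.

Lemma commg_commg_conj a b g r s :
    a \in M -> b \in M -> g \in G -> r \in G -> s \in G -> r != 1 -> s != 1 ->
  [~ [~ a ^ g, r], [~ b ^ g, s]] = [~ a, b] ^ g * [~ a ^ (g * r), b ^ (g * s)].
Proof.
move=> Ma Mb Gg Gr Gs ntr nts.
have cM x y k : k \in G -> k != 1 -> x \in M -> y \in M -> commute (x ^ g)^-1 (y ^ (g * k)).
  move=> Gk ntk Mx My; apply: (commute_conj_factors Gg (groupM Gg Gk)).
  - exact: mulg_neq.
  - by rewrite groupV memJ_conjg.
  - by rewrite memJ_conjg.
rewrite (commgEl (a ^ g)) (commgEl (b ^ g)) -!conjgM commgMM; try by apply: cM.
by rewrite -!conjVg -conjRg commgVV_der_center.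
Qed.

Section CyclicDerived.

Hypothesis cycM' : cyclic M^`(1).

Lemma conj_der_notin_der_commg g w :
  g \in G -> w \in M^`(1) -> w != 1 -> w ^ g \notin [~: B^`(1), G].
Proof.
move=> Gg M'w ntw; have [V [f [fM f0]]] := cyclic_zmod_embedding cycM'.
apply: contra ntw => /(coord_sum_der_commg fM).
by rewrite coord_sum_conj_der // => /(f0 _ M'w) ->.
Qed.

Lemma conj_der_mulg_notin_der_commg g h w :
  g \in G -> h \in G -> w \in M^`(1) -> w ^+ 2 != 1 ->
  w ^ g * w ^ h \notin [~: B^`(1), G].
Proof.
move=> Gg Gh M'w ntw2; have [V [f [fM f0]]] := cyclic_zmod_embedding cycM'.
apply: contra ntw2 => /(coord_sum_der_commg fM).
rewrite coord_sumM ?conj_der_mem_der // !coord_sum_conj_der // -fM //.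
by rewrite expgS expg1 => /f0 ->; rewrite ?groupM.
Qed.

Lemma commg_commg_conj_notin a b g r :
    a \in M -> b \in M -> [~ a, b] != 1 -> g \in G -> r \in G -> r != 1 ->
    coprime #[r] #[[~ a, b]] ->
  exists2 s, s \in <[r]> & [~ [~ a ^ g, r], [~ b ^ g, s]] \notin [~: B^`(1), G].
Proof.
move=> Ma Mb ntw Gg Gr ntr co_rw; have M'w : [~ a, b] \in M^`(1) by apply: mem_commg.
have [w2 | ntw2] := eqVneq ([~ a, b] ^+ 2) 1; last first.
  exists r; first exact: cycle_id.
  rewrite commg_commg_conj // -conjRg.
  by apply: (conj_der_mulg_notin_der_commg Gg _ M'w); rewrite ?groupM.
have ntr2 : r ^+ 2 != 1.
  apply: contraTneq co_rw => r2.
  by rewrite (order_prime_expg (isT : prime 2) r2 ntr) (order_prime_expg (isT : prime 2) w2 ntw).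
have [Ggr Ggr2] := (groupM Gg Gr, groupM Gg (groupX 2 Gr)).
have cr_r2 : [~ a ^ (g * r), b ^ (g * r ^+ 2)] = 1.
  apply/eqP/commgP/(commute_conj_factors Ggr Ggr2); rewrite ?memJ_conjg //.
  by rewrite (inj_eq (mulgI g)) expgS expg1 mulg_neq.
exists (r ^+ 2); first exact: mem_cycle.
by rewrite commg_commg_conj ?groupX // cr_r2 mulg1 conj_der_notin_der_commg.
Qed.

Lemma exists_noncentral_prime_order (R : {group gT})
      (O : {set {set coset_of [~: B^`(1), G]}}) p a b g r :
    R \subset G -> prime p -> a ^+ p \in M^`(1) -> a \in M -> b \in M ->
    [~ a, b] != 1 -> g \in G -> (M :^ g) / [~: B^`(1), G] \in O ->
    r \in R -> r != 1 -> coprime #[r] #[[~ a, b]] ->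
  let E := [~: <<\bigcup_(A in O) A>>, R / [~: B^`(1), G]] in
  exists2 x, x \in E & prime #[x] && (x \notin 'Z(E)).
Proof.
move=> sRG pr_p M'ap Ma Mb ntw Gg OMg Rr ntr co_rw E.
have NR y : y \in R -> y \in 'N([~: B^`(1), G]).
  by move=> Ry; rewrite (subsetP (commg_normr G _)) ?(subsetP sRG).
have Nconj x : x \in M -> x ^ g \in 'N([~: B^`(1), G]).
  move=> Mx; apply: (subsetP bigdprod_norm_der_commg).
  by rewrite (subsetP (conj_sub_bigdprod Gg)) ?memJ_conjg.
have Ecommg x y : x \in M -> y \in R -> coset _ [~ x ^ g, y] \in E.
  move=> Mx Ry; apply: coset_commg_mem_commg OMg _ Ry (Nconj x Mx) (NR y Ry).
  by rewrite memJ_conjg.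
have [s rs nUV] := commg_commg_conj_notin Ma Mb ntw Gg (subsetP sRG r Rr) ntr co_rw.
have Rs : s \in R by apply: subsetP rs; rewrite cycle_subG.
have uZ := coset_notin_center (groupR (Nconj a Ma) (NR r Rr))
  (groupR (Nconj b Mb) (NR s Rs)) (Ecommg b s Mb Rs) nUV.
exists (coset _ [~ a ^ g, r]); first exact: Ecommg.
rewrite uZ andbT (order_prime_expg pr_p) //; last first.
  by apply: contraNneq uZ => ->; apply: group1.
rewrite -morphX ?groupR ?Nconj ?NR //; apply: coset_id.
exact: expg_commg_conj_mem Ma M'ap Gg (subsetP sRG r Rr) ntr.
Qed.

End CyclicDerived.

End CentralDerived.

End ConjugateDirectProduct.

Theorem lemma2p8 (gT : finGroupType) (p q : nat) (W B G M R : {group gT}) :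
  prime p -> prime q -> p != q ->
  extra_special p M -> #|M| = (p ^ 3)%N ->
  B ><| G = W ->
  \big[dprod/1]_(g in G) (M :^ g) = B ->
  R \subset 'Z(G) -> #|R| = q ->
  forall g, g \in G ->
  let N := [~: B^`(1), G] in
  let O := [set ((M :^ g) / N) :^ coset N r | r in R] in
  let E := [~: <<\bigcup_(A in O) A>>, R / N] in
  exists2 x, x \in E & prime #[x] && (x \notin 'Z(E)).
Proof.
move=> pr_p pr_q neq_pq esM oM defW defB sRZ oR g Gg N O E.
have [_ _ nBG _] := sdprodP defW.
have esM3 := extra_special_p3_extraspecial pr_p esM oM.
have [pM derM oZ] := esM.
have [a Ma [b Mb ntw]] := nonabelian_commg (extraspecial_nonabelian esM3).
have [r Rr ntr] : exists2 r, r \in R & r != 1.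
  by apply/trivgPn; rewrite -cardG_gt1 oR prime_gt1.
have co_rw : coprime #[r] #[[~ a, b]].
  apply: coprime_dvdl (order_dvdG Rr) (coprime_dvdr (order_dvdG (mem_commg Ma Mb)) _).
  by rewrite oR /= -[[~: M, M]]/(M^`(1)) derM oZ prime_coprime // dvdn_prime2 // eq_sym.
have cycM' : cyclic M^`(1) by rewrite derM prime_cyclic ?oZ.
have OMg : M :^ g / N \in O by apply/imsetP; exists 1; rewrite ?morph1 ?conjsg1.
have := exists_noncentral_prime_order defB nBG derM cycM' (subset_trans sRZ (center_sub G))
  pr_p (expg_extraspecial_der pM esM3 Ma) Ma Mb ntw Gg OMg Rr ntr co_rw.
exact.
Qed.
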